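(* Let $\mathbf A\subset\mathbb Z^n_{\ge0}$ be a finite set not contained in any coordinate hyperplane $E_i=\{x_i=0\}$. Put $\Delta_i=\mathrm{Conv}(\mathbf A\setminus E_i)$ for $i=1,\dots,n$. Then: (1) $\Delta_1,\dots,\Delta_n$ are semi-interlaced in $(\mathrm{Conv}(\mathbf A),\mathbf A)$; (2) a proper face $K$ of $\mathrm{Conv}(\mathbf A)$ is a suture if and only if there is a coordinate subspace $E(K)$ with $K\subset E(K)$ and $\dim E(K)=\dim K$.
   Context: Let $A$ be a finite lattice set and $\mathbf P=\mathrm{Conv}(A)$. For a polytope $D$ with vertices in $A$, let $\mathcal D$ be the set of inclusion-maximal faces of $\mathbf P$ disjoint from $D$. $D$ is a daughter sub-polytope of $(\mathbf P,A)$ if these faces are pairwise disjoint and $D=\mathrm{Conv}(A\setminus\bigcup_{K\in\mathcal D}K)$. Daughter sub-polytopes $D_1,\dots,D_n$ are semi-interlaced in $(\mathbf P,A)$ if every face $\mathbf P^\gamma$, $\gamma\neq0$, is met by at least $\dim\mathbf P^\gamma$ of the $D_i$. Here $\mathbf P^\gamma$ is the face where $\gamma$ is minimal. A face is a suture if it is met by exactly as many $D_i$ as its dimension. *)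

From HB Require Import structures.
From mathcomp Require Import all_boot all_order all_algebra.
From mathcomp Require Import boolp reals.
Set Implicit Arguments. Unset Strict Implicit. Unset Printing Implicit Defensive.
Import Order.TTheory GRing.Theory Num.Theory.
Local Open Scope ring_scope.

Section Polytopes.
Variables (R : realType) (n : nat).
Local Notation V := 'rV[R]_n.

(* Conv (A ∩ P): convex combinations of the points of A satisfying P. *)
Definition convP (A : seq V) (P : V -> Prop) (x : V) : Prop :=
  exists w : 'I_(size A) -> R,
    [/\ forall i, 0 <= w i,
        forall i, w i != 0 -> P (A`_i),
        \sum_i w i = 1
      & x = \sum_i w i *: A`_i].

Definition conv (A : seq V) : V -> Prop := convP A (fun _ => True).

Definition pairing (g x : V) : R := \sum_i g 0 i * x 0 i.

Definition face (A : seq V) (g : V) (x : V) : Prop :=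
  conv A x /\ forall y, conv A y -> pairing g x <= pairing g y.

Definition is_face (A : seq V) (K : V -> Prop) : Prop :=
  exists g : V, forall x, K x <-> face A g x.

Definition proper_face (A : seq V) (K : V -> Prop) : Prop :=
  is_face A K /\ ~ (forall x, K x <-> conv A x).

(* affine dimension: least dimension of a linear subspace containing all
   differences x - y of points of S (i.e. dim of the direction of aff(S)). *)
Definition dimP (S : V -> Prop) (d : nat) : bool :=
  `[< exists U : {vspace V}, \dim U = d /\
        forall x y, S x -> S y -> (x - y) \in U >].

Lemma dimP_ex (S : V -> Prop) : exists d, dimP S d.
Proof.
exists (\dim (fullv : {vspace V})); apply/asboolP.
by exists fullv; split => // x y _ _; rewrite memvf.
Qed.

Definition affdim (S : V -> Prop) : nat := ex_minn (dimP_ex S).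

Definition maxdisj (A : seq V) (D K : V -> Prop) : Prop :=
  [/\ is_face A K,
      forall x, ~ (K x /\ D x)
    & forall K', is_face A K' -> (forall x, ~ (K' x /\ D x)) ->
        (forall x, K x -> K' x) -> forall x, K' x -> K x].

Definition daughter (A : seq V) (D : V -> Prop) : Prop :=
  (* the maximal faces disjoint from D are pairwise disjoint
     (two of them that meet coincide) *)
  (forall K1 K2, maxdisj A D K1 -> maxdisj A D K2 ->
     (exists x, K1 x /\ K2 x) -> forall x, K1 x <-> K2 x) /\
  (forall x, D x <-> convP A (fun a => ~ exists K, maxdisj A D K /\ K a) x).

Definition nmet (k : nat) (D : 'I_k -> V -> Prop) (K : V -> Prop) : nat :=
  #|[set i : 'I_k | `[< exists x, D i x /\ K x >] ]|.

Definition semi_interlaced (A : seq V) (k : nat) (D : 'I_k -> V -> Prop)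
  : Prop :=
  (forall i, daughter A (D i)) /\
  forall g : V, g != 0 -> (affdim (face A g) <= nmet D (face A g))%N.

Definition suture (A : seq V) (k : nat) (D : 'I_k -> V -> Prop)
  (K : V -> Prop) : Prop :=
  is_face A K /\ nmet D K = affdim K.

End Polytopes.

Definition embed (R : realType) (n : nat) (a : 'rV[nat]_n) : 'rV[R]_n :=
  map_mx (fun k : nat => k%:R) a.

From HB Require Import structures.
From mathcomp Require Import all_boot all_order all_algebra.
From mathcomp Require Import boolp reals.
Import Order.TTheory GRing.Theory Num.Theory.
Local Open Scope ring_scope.
Set Implicit Arguments. Unset Strict Implicit.

(* The heart of the argument is one observation: a face K = P^γ of P = Conv(A)
   that is disjoint from Δ_i lies in the hyperplane E_i.  Indeed every point of
   A carrying positive weight in a convex representation of a point of K lies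
   in K (γ is minimal on K), and such a point cannot have a nonzero i-th
   coordinate, since it would then belong to Δ_i.  Consequently
   - a face K lies in the coordinate subspace spanned by the indices J(K) of
     the Δ_i meeting K, so dim K <= #J(K) = nmet K: this is semi-interlacing,
     and it shows that a suture lies in a coordinate subspace of its dimension;
   - conversely, if K lies in E_J with #J = dim K, then every Δ_i meeting K
     has i in J (points of Δ_i have positive i-th coordinate), so
     nmet K <= #J = dim K and K is a suture;
   - the only maximal face disjoint from Δ_i is the coordinate facet
     P ∩ E_i = P^{e_i} (when A meets E_i at all), which makes Δ_i a daughter. *)

Section ConvexHulls.
Variables (R : realType) (n : nat).
Local Notation V := 'rV[R]_n.

Definition hull_off (A : seq V) (i : 'I_n) : V -> Prop :=
  convP A (fun y => y 0 i != 0).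

Definition met_set (k : nat) (D : 'I_k -> V -> Prop) (K : V -> Prop)
  : {set 'I_k} :=
  [set i | `[< exists x, D i x /\ K x >]].

Lemma convP_pt (A : seq V) (P : V -> Prop) (k : 'I_(size A)) :
  P A`_k -> convP A P A`_k.
Proof.
move=> Pk; exists (fun j => (j == k)%:R); split.
- by move=> j; rewrite ler0n.
- by move=> j; have [->|] := eqVneq j k => //; rewrite mulr0n eqxx.
- by rewrite (bigD1 k) //= eqxx big1 ?addr0 // => j /negbTE ->.
- rewrite (bigD1 k) //= eqxx scale1r big1 ?addr0 // => j /negbTE ->.
  by rewrite scale0r.
Qed.

Lemma conv_pt (A : seq V) (k : 'I_(size A)) : conv A A`_k.
Proof. exact: (@convP_pt A (fun _ => True)). Qed.

Lemma convP_mono (A : seq V) (P Q : V -> Prop) x :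
  (forall k : 'I_(size A), P A`_k -> Q A`_k) -> convP A P x -> convP A Q x.
Proof. by move=> PQ [w [w0 wP w1 xE]]; exists w; split => // k /wP /PQ. Qed.

Lemma weight_support (m : nat) (w : 'I_m -> R) :
  \sum_k w k = 1 -> exists k, w k != 0.
Proof.
move=> w1; case: (pickP (fun k => w k != 0)) => [k wk|none]; first by exists k.
move: w1; rewrite big1 => [/eqP|j _]; first by rewrite eq_sym oner_eq0.
by move: (none j) => /negbFE/eqP.
Qed.

Lemma pairing_sum (g : V) (m : nat) (w : 'I_m -> R) (a : 'I_m -> V) :
  pairing g (\sum_j w j *: a j) = \sum_j w j * pairing g (a j).
Proof.
rewrite /pairing; under eq_bigr => i _ do rewrite summxE mulr_sumr.
rewrite exchange_big /=; apply: eq_bigr => j _.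
by rewrite mulr_sumr; apply: eq_bigr => i _; rewrite mxE mulrCA.
Qed.

Lemma pairing_delta (i : 'I_n) (x : V) : pairing (delta_mx 0 i) x = x 0 i.
Proof.
rewrite /pairing (bigD1 i) //= mxE !eqxx mul1r big1 ?addr0 // => j ji.
by rewrite mxE eqxx (negbTE ji) mul0r.
Qed.

(* If x ∈ P^γ is a convex combination of points of A, every point with a
   nonzero weight lies in P^γ too: the weighted excesses of <γ, .> over
   <γ, x> are nonnegative and sum to zero. *)
Lemma face_support (A : seq V) g x (w : 'I_(size A) -> R) :
  face A g x -> (forall k, 0 <= w k) -> \sum_k w k = 1 ->
  x = \sum_k w k *: A`_k -> forall k, w k != 0 -> face A g A`_k.
Proof.
move=> [cx xmin] w0 w1 xE k wk.
have excess_ge0 j : 0 <= w j * (pairing g A`_j - pairing g x).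
  by rewrite mulr_ge0 // subr_ge0; apply/xmin/conv_pt.
have excess_sum : \sum_j w j * (pairing g A`_j - pairing g x) = 0.
  under eq_bigr => j _ do rewrite mulrBr.
  by rewrite sumrB -mulr_suml w1 mul1r -pairing_sum -xE subrr.
have := @psumr_eq0P _ _ xpredT _ (fun j _ => excess_ge0 j) excess_sum k isT.
move/eqP; rewrite mulf_eq0 (negbTE wk) /= subr_eq0 => /eqP gk.
by split; [exact: conv_pt | move=> y cy; rewrite gk; apply: xmin].
Qed.

Lemma face_disjoint_in_hyperplane (A : seq V) (K : V -> Prop) g i :
  (forall x, K x <-> face A g x) ->
  (forall x, ~ (K x /\ hull_off A i x)) ->
  forall x, K x -> x 0 i = 0.
Proof.
move=> KE Kdis x Kx; have fx := (KE x).1 Kx.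
case: (fx.1) => w [w0 _ w1 xE].
rewrite xE summxE; apply: big1 => k _; rewrite mxE.
have [->|wk] := eqVneq (w k) 0; first by rewrite mul0r.
have [->|aki] := eqVneq (A`_k 0 i) 0; first by rewrite mulr0.
exfalso; apply: (Kdis A`_k); split; last exact: convP_pt.
exact/KE/(face_support fx w0 w1 xE wk).
Qed.

Lemma face_in_met_coords (A : seq V) (K : V -> Prop) g :
  (forall x, K x <-> face A g x) ->
  forall x, K x -> forall i, i \notin met_set (hull_off A) K -> x 0 i = 0.
Proof.
move=> KE x Kx i iJ; apply: (face_disjoint_in_hyperplane KE) _ x Kx.
move=> y [Ky Dy]; move: iJ; rewrite inE => /negP; apply.
by apply/asboolP; exists y.
Qed.

(* A set contained in the coordinate subspace E_J has dimension at most #J: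
   the differences of its points lie in the span of the unit vectors e_j,
   j ∈ J, which are linearly independent. *)
Lemma dimP_coord (S : V -> Prop) (J : {set 'I_n}) :
  (forall x, S x -> forall i, i \notin J -> x 0 i = 0) -> dimP S #|J|.
Proof.
move=> SJ; apply/asboolP.
pose e (j : 'I_n) : V := delta_mx 0 j.
pose T : n.-tuple V := [tuple e j | j < n].
have Te (j : 'I_n) : T`_j = e j by rewrite -tnth_nth tnth_mktuple.
have Tfree : free T.
  apply/freeP => c c0 i.
  have := congr1 (fun v : V => v 0 i) c0.
  rewrite summxE mxE (bigD1 i) //= Te !mxE !eqxx mulr1 big1 ?addr0 // => j ji.
  by rewrite Te !mxE eqxx eq_sym (negbTE ji) mulr0.
have e_inj : injective e.
  move=> i j /rowP/(_ i); rewrite !mxE !eqxx /=.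
  by case: eqP => // _ /eqP; rewrite oner_eq0.
pose Y := [seq e j | j <- enum J].
have Yfree : free Y.
  have TY : perm_eq (filter (mem Y) T) Y.
    apply: uniq_perm.
    - by apply: filter_uniq; rewrite map_inj_uniq ?enum_uniq.
    - by rewrite map_inj_uniq ?enum_uniq.
    move=> v; rewrite mem_filter; apply/andP/idP => [[]//|vY]; split => //.
    by case/mapP: vY => j _ ->; apply/mapP; exists j; rewrite ?mem_enum.
  by rewrite -(perm_free TY) filter_free.
exists <<Y>>%VS; split; first by move/eqP: Yfree => ->; rewrite size_map -cardE.
move=> x y Sx Sy.
rewrite (row_sum_delta (x - y)) (bigID (mem J)) /= [X in _ + X]big1 ?addr0.
  apply: memv_suml => j jJ; apply/memvZ/memv_span.
  by apply/mapP; exists j; rewrite ?mem_enum.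
by move=> j jJ; rewrite !mxE (SJ x Sx j jJ) (SJ y Sy j jJ) subrr scale0r.
Qed.

Lemma affdim_coord (S : V -> Prop) (J : {set 'I_n}) :
  (forall x, S x -> forall i, i \notin J -> x 0 i = 0) -> (affdim S <= #|J|)%N.
Proof.
by move=> SJ; rewrite /affdim; case: ex_minnP => m _; apply; apply: dimP_coord.
Qed.

Lemma affdim_le_nmet (A : seq V) (K : V -> Prop) g :
  (forall x, K x <-> face A g x) -> (affdim K <= nmet (hull_off A) K)%N.
Proof. by move=> KE; apply/affdim_coord/(face_in_met_coords KE). Qed.

End ConvexHulls.

Section NonnegativePoints.
Variables (R : realType) (n : nat) (A : seq 'rV[R]_n).
Local Notation V := 'rV[R]_n.
Hypothesis A_ge0 : forall (k : nat) i, 0 <= A`_k 0 i.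

Definition coord_facet (i : 'I_n) (x : V) : Prop := conv A x /\ x 0 i = 0.

Lemma conv_ge0 i x : conv A x -> 0 <= x 0 i.
Proof.
case=> w [w0 _ w1 ->]; rewrite summxE; apply: sumr_ge0 => j _.
by rewrite mxE mulr_ge0.
Qed.

Lemma hull_off_pos i x : hull_off A i x -> 0 < x 0 i.
Proof.
case=> w [w0 wP w1 xE]; have [k wk] := weight_support w1.
rewrite xE summxE (bigD1 k) //= mxE.
have wAk_gt0 : 0 < w k * A`_k 0 i.
  by rewrite mulr_gt0 // lt_def ?wk ?w0 ?wP ?A_ge0.
apply: (lt_le_trans wAk_gt0); rewrite lerDl.
by apply: sumr_ge0 => j _; rewrite mxE mulr_ge0.
Qed.

Lemma coord_facet_disjoint i x : ~ (coord_facet i x /\ hull_off A i x).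
Proof. by move=> [[_ x0] /hull_off_pos]; rewrite x0 ltxx. Qed.

Lemma coord_facet_face i (k : 'I_(size A)) :
  A`_k 0 i = 0 -> forall x, coord_facet i x <-> face A (delta_mx 0 i) x.
Proof.
move=> aki x; split.
- case=> cx x0; split => // y cy; rewrite !pairing_delta x0; exact: conv_ge0.
- case=> cx xmin; split => //; apply/eqP; rewrite eq_le conv_ge0 // andbT.
  by have := xmin _ (conv_pt k); rewrite !pairing_delta aki.
Qed.

Lemma disjoint_face_in_facet i K :
  is_face A K -> (forall x, ~ (K x /\ hull_off A i x)) ->
  forall x, K x -> coord_facet i x.
Proof.
move=> [g KE] Kdis x Kx; split; first exact: ((KE x).1 Kx).1.
exact: (face_disjoint_in_hyperplane KE).
Qed.

Lemma coord_facet_maxdisj i (k : 'I_(size A)) :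
  A`_k 0 i = 0 -> maxdisj A (hull_off A i) (coord_facet i).
Proof.
move=> aki; split; last by move=> K' /disjoint_face_in_facet H /H.
- by exists (delta_mx 0 i); exact: coord_facet_face aki.
- exact: coord_facet_disjoint.
Qed.

Lemma maxdisj_vertex i K x :
  maxdisj A (hull_off A i) K -> K x -> exists k : 'I_(size A), A`_k 0 i = 0.
Proof.
move=> [[g KE] Kdis _] Kx; have fx := (KE x).1 Kx.
case: (fx.1) => w [w0 _ w1 xE]; have [k wk] := weight_support w1.
exists k; apply: (face_disjoint_in_hyperplane KE Kdis).
exact/KE/(face_support fx w0 w1 xE wk).
Qed.

Lemma maxdisj_coord_facet i K x0 :
  maxdisj A (hull_off A i) K -> K x0 -> forall x, K x <-> coord_facet i x.
Proof.
move=> mK Kx0; have [k aki] := maxdisj_vertex mK Kx0.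
case: mK => Kface Kdis Kmax x; split; first exact: disjoint_face_in_facet.
case: (coord_facet_maxdisj aki) => Fface Fdis _.
by apply: Kmax => //; apply: disjoint_face_in_facet.
Qed.

(* Δ_i is a daughter sub-polytope: its maximal disjoint faces all equal
   P ∩ E_i, and removing them from A leaves exactly the points off E_i. *)
Lemma hull_off_daughter i : daughter A (hull_off A i).
Proof.
split.
- move=> K1 K2 m1 m2 [x0 [K1x0 K2x0]] x.
  by rewrite (maxdisj_coord_facet m1 K1x0) (maxdisj_coord_facet m2 K2x0).
- move=> x; split; apply: convP_mono => k.
  + move=> aki [K [[_ Kdis _] Kk]].
    by apply: (Kdis A`_k); split; last exact: convP_pt.
  + move=> notin_face; apply/eqP => aki; apply: notin_face.
    exists (coord_facet i); split; first exact: coord_facet_maxdisj aki.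
    by split; first exact: conv_pt.
Qed.

Lemma met_set_sub_coords (K : V -> Prop) (J : {set 'I_n}) :
  (forall x, K x -> forall i, i \notin J -> x 0 i = 0) ->
  met_set (hull_off A) K \subset J.
Proof.
move=> KJ; apply/subsetP => i; rewrite inE => /asboolP [x [Dx Kx]].
apply/negPn/negP => iJ.
by move: (hull_off_pos Dx); rewrite (KJ x Kx i iJ) ltxx.
Qed.

End NonnegativePoints.

Lemma embed_ge0 (R : realType) (n : nat) (A : seq 'rV[nat]_n) (k : nat) i :
  0 <= (map (@embed R n) A)`_k 0 i.
Proof.
case: (ltnP k (size A)) => hk; first by rewrite (nth_map 0) // mxE ler0n.
by rewrite nth_default ?size_map // mxE.
Qed.

Unset Implicit Arguments. Set Strict Implicit.

Theorem lemma6p1 (R : realType) (n : nat) (A : seq 'rV[nat]_n)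
  (hA : forall i : 'I_n, exists2 a, a \in A & a 0 i != 0%N) :
  let Ar := map (@embed R n) A in
  let Delta := fun (i : 'I_n) => convP Ar (fun x => x 0 i != 0) in
  semi_interlaced Ar Delta /\
  (forall K : 'rV[R]_n -> Prop, proper_face Ar K ->
     (suture Ar Delta K <->
      exists J : {set 'I_n},
        (forall x, K x -> forall i, i \notin J -> x 0 i = 0) /\
        #|J| = affdim K)).
Proof.
move=> Ar Delta; have Ar_ge0 := @embed_ge0 R n A.
split.
  split; first exact: hull_off_daughter Ar_ge0.
  by move=> g _; exact: (@affdim_le_nmet _ _ _ _ g).
move=> K [[g KE] _]; split.
- case=> _ nmetE; exists (met_set Delta K); split; last by rewrite -nmetE.
  exact: face_in_met_coords KE.
- case=> J [KJ cardJ]; split; first by exists g.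
  apply/eqP; rewrite eqn_leq (affdim_le_nmet KE) andbT -cardJ.
  exact/subset_leq_card/(met_set_sub_coords Ar_ge0).
Qed.
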